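(* Let $\Lambda\in\mathbb{R}$, $\mathfrak{e}>0$, $\mathfrak{q}\in(0,1]$, $r_+>0$, $Q_{\max}>0$ and $K>0$, and assume $\Lambda r_+^2<3$. Let $r\in C^1([0,1];(0,\infty))$, $Q\in C^0([0,1];\mathbb{R})$ and $h\in C^1([0,1];\mathbb{R})$ satisfy: (i) $r_+/2\le r(V)\le r_+$ for all $V\in[0,1]$; (ii) $|Q(V)|\le \mathfrak{q}\,Q_{\max}$ for all $V\in[0,1]$; (iii) $\partial_V\big(r\,h\big)=-\tfrac14\Big(1-\tfrac{Q^2}{r^2}-\Lambda r^2\Big)$ on $[0,1]$; (iv) $\partial_V r(0)>0$ and $h(0)=\dfrac{\Lambda r(0)^2/3-1}{4\,\partial_V r(0)}$; (v) $\partial_V r(0)\le K\,\mathfrak{q}/\mathfrak{e}$. Then there exists a constant $C>0$ depending only on $K$, $\Lambda r_+^2$ and $Q_{\max}/r_+$ such that, if $\dfrac{\mathfrak{e}\,r_+^2}{\mathfrak{q}\,Q_{\max}}>C$, then $\sup_{V\in[0,1]} h(V)<0$.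
   Context: This abstracts the setting of characteristic gluing for the spherically symmetric Einstein–Maxwell–massless charged scalar field system with cosmological constant $\Lambda$, with metric $-\Omega^2\,dU\,dV+r^2d\omega^2$ in the gauge $\Omega\equiv1$ on the outgoing null cone $\{U=0,\ V\in[0,1]\}$. There $r(V)$ is the area radius along the cone, $h(V)=\partial_U r(0,V)$ is its transverse derivative, $Q(V)$ is the enclosed charge, $\mathfrak{e}$ is the scalar field's charge, $r_+$ is the horizon radius of the target Reissner–Nordström(-(A)dS) black hole, whose charge is $\mathfrak{q}Q_{\max}$ with $Q_{\max}$ the maximal (extremal) charge for its mass and $\Lambda$. Equation (iii) is the wave equation for $r$ (with zero scalar mass) rewritten in terms of $r\,\partial_U r$; condition (iv) expresses vanishing Hawking mass $m=\tfrac r2\big(1+4\partial_Ur\,\partial_Vr/\Omega^2-\Lambda r^2/3\big)$ at the initial sphere $V=0$. The conclusion means there are no antitrapped spheres on the cone. *)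

From Stdlib Require Import Reals Lra.
From Coquelicot Require Import Coquelicot.
Open Scope R_scope.

Definition I01 (x : R) : Prop := 0 <= x <= 1.

Definition cont_on01 (f : R -> R) : Prop :=
  forall x, I01 x -> filterlim f (within I01 (locally x)) (locally (f x)).

Definition deriv_on01 (f f' : R -> R) : Prop :=
  forall x, I01 x ->
    filterlim (fun y => (f y - f x) / (y - x))
      (within (fun y => I01 y /\ y <> x) (locally x)) (locally (f' x)).

Definition C1_on01 (f f' : R -> R) : Prop :=
  deriv_on01 f f' /\ cont_on01 f'.

(* Along the cone the quantity r h has derivative (Q^2/r^2 + Lam r^2 - 1)/4,
   which conditions (i), (ii) and Lam r_+^2 < 3 bound above by a constant M
   depending only on Lam r_+^2 and Q_max/r_+.  The vanishing of the Hawking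
   mass at V = 0 makes h(0) negative, of size at least e/(K q) by (v); hence
   r h starts below -c e r_+/q and, once e r_+^2/(q Q_max) is large, stays
   below -M on all of [0,1].  Dividing by r <= r_+ gives sup h <= -M/r_+. *)

From Stdlib Require Import Reals Lra.
From Coquelicot Require Import Coquelicot.
Open Scope R_scope.

Section RelativeDerivative.

Variables f f' : R -> R.
Hypothesis f_deriv : deriv_on01 f f'.

Lemma deriv_on01_quotient x : I01 x -> forall eps, 0 < eps ->
  exists d, 0 < d /\ forall y, I01 y -> y <> x -> Rabs (y - x) < d ->
    Rabs ((f y - f x) / (y - x) - f' x) < eps.
Proof.
  intros Hx eps Heps.
  destruct (proj1 (filterlim_locally _ _) (f_deriv x Hx) (mkposreal eps Heps)) as [d Hd].
  exists d; split; [apply cond_pos |].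
  intros y Hy Hyx Hyd; apply (Hd y); [exact Hyd | split; assumption].
Qed.

Lemma deriv_on01_continuous x : I01 x -> forall eps, 0 < eps ->
  exists d, 0 < d /\ forall y, I01 y -> Rabs (y - x) < d -> Rabs (f y - f x) < eps.
Proof.
  intros Hx eps Heps.
  destruct (deriv_on01_quotient x Hx 1 Rlt_0_1) as [d [Hd Hquot]].
  set (m := Rabs (f' x) + 1).
  assert (Hm : 0 < m) by (pose proof (Rabs_pos (f' x)); unfold m; lra).
  exists (Rmin d (eps / m)); split.
  { apply Rmin_glb_lt; [exact Hd | apply Rdiv_lt_0_compat; assumption]. }
  intros y Hy Hyx.
  destruct (Req_dec y x) as [-> | Hne].
  { rewrite Rminus_diag, Rabs_R0; exact Heps. }
  pose proof (Rmin_l d (eps / m)); pose proof (Rmin_r d (eps / m)).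
  assert (Hslope : Rabs ((f y - f x) / (y - x)) <= m).
  { specialize (Hquot y Hy Hne ltac:(lra)).
    pose proof (Rabs_triang ((f y - f x) / (y - x) - f' x) (f' x)) as Htri.
    replace ((f y - f x) / (y - x) - f' x + f' x) with ((f y - f x) / (y - x))
      in Htri by ring.
    unfold m; lra. }
  replace (f y - f x) with ((f y - f x) / (y - x) * (y - x)) by (field; lra).
  rewrite Rabs_mult.
  apply Rle_lt_trans with (m * Rabs (y - x)).
  { apply Rmult_le_compat_r; [apply Rabs_pos | exact Hslope]. }
  replace eps with (m * (eps / m)) by (field; lra).
  apply Rmult_lt_compat_l; lra.
Qed.

Lemma deriv_on01_is_derive x : 0 < x < 1 -> is_derive f x (f' x).
Proof.
  intros Hx; apply is_derive_Reals; intros eps Heps.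
  destruct (deriv_on01_quotient x ltac:(unfold I01; lra) eps Heps) as [d [Hd Hquot]].
  assert (Hpos : 0 < Rmin d (Rmin x (1 - x))).
  { apply Rmin_glb_lt; [exact Hd | apply Rmin_glb_lt; lra]. }
  exists (mkposreal _ Hpos); simpl; intros k Hk0 Hk.
  pose proof (Rmin_l d (Rmin x (1 - x))); pose proof (Rmin_r d (Rmin x (1 - x))).
  pose proof (Rmin_l x (1 - x)); pose proof (Rmin_r x (1 - x)).
  assert (Hkx : - x < k < 1 - x) by (split; apply Rabs_def2 in Hk; lra).
  specialize (Hquot (x + k)); replace (x + k - x) with k in Hquot by ring.
  apply Hquot; [unfold I01; lra | lra | lra].
Qed.

End RelativeDerivative.

Definition clamp01 (y : R) : R := Rmax 0 (Rmin 1 y).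

Lemma clamp01_in y : I01 (clamp01 y).
Proof. unfold clamp01, I01, Rmax, Rmin; repeat destruct Rle_dec; lra. Qed.

Lemma clamp01_id y : I01 y -> clamp01 y = y.
Proof. unfold clamp01, I01, Rmax, Rmin; intros; repeat destruct Rle_dec; lra. Qed.

Lemma clamp01_lipschitz y z : Rabs (clamp01 z - clamp01 y) <= Rabs (z - y).
Proof.
  unfold clamp01, Rmax, Rmin; repeat destruct Rle_dec;
    unfold Rabs; repeat destruct Rcase_abs; lra.
Qed.

(* The mean value theorem is applied to [f \o clamp01], which agrees with [f]
   on [0,1] but is continuous on all of R. *)
Lemma deriv_on01_le_linear f f' M : deriv_on01 f f' ->
  (forall V, I01 V -> f' V <= M) -> forall x, I01 x -> f x <= f 0 + M * x.
Proof.
  intros Hf HM x Hx; destruct Hx as [Hx0 Hx1].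
  destruct (Req_dec x 0) as [-> | Hne]; [lra |].
  set (F := fun y => f (clamp01 y)).
  assert (HF : forall y, I01 y -> F y = f y) by (intros; unfold F; rewrite clamp01_id; auto).
  destruct (MVT_gen F 0 x f') as [c [Hc Hmvt]];
    rewrite Rmin_left, Rmax_right in * by lra.
  - intros y Hy.
    apply is_derive_ext_loc with f; [| apply (deriv_on01_is_derive f f'); auto; lra].
    assert (Hpos : 0 < Rmin y (1 - y)) by (apply Rmin_glb_lt; lra).
    exists (mkposreal _ Hpos); intros t Ht; change (Rabs (t - y) < Rmin y (1 - y)) in Ht.
    pose proof (Rmin_l y (1 - y)); pose proof (Rmin_r y (1 - y)).
    apply Rabs_def2 in Ht; symmetry; apply HF; unfold I01; lra.
  - intros y _ eps Heps.
    destruct (deriv_on01_continuous f f' Hf (clamp01 y) (clamp01_in y) eps Heps)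
      as [d [Hd Hcont]].
    exists d; split; [exact Hd |]; intros z [_ Hz].
    apply Hcont; [apply clamp01_in |].
    eapply Rle_lt_trans; [apply clamp01_lipschitz | exact Hz].
  - rewrite !HF in Hmvt by (unfold I01; lra).
    assert (f' c <= M) by (apply HM; unfold I01; lra).
    nra.
Qed.

Lemma Lam_r2_le_Rmax Lam rV rp : 0 <= rV <= rp ->
  Lam * rV ^ 2 <= Rmax (Lam * rp ^ 2) 0.
Proof.
  intros HrV; pose proof (Rmax_l (Lam * rp ^ 2) 0); pose proof (Rmax_r (Lam * rp ^ 2) 0).
  destruct (Rle_dec 0 Lam); [| nra].
  assert (rV ^ 2 <= rp ^ 2) by (apply pow_incr; exact HrV).
  nra.
Qed.

Lemma rh_slope_le Lam q rp Qmax rV QV : 0 < rp -> q <= 1 -> 0 < q ->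
  rp / 2 <= rV <= rp -> Rabs QV <= q * Qmax ->
  - / 4 * (1 - QV ^ 2 / rV ^ 2 - Lam * rV ^ 2)
    <= (Qmax / rp) ^ 2 + Rmax (Lam * rp ^ 2) 0 / 4.
Proof.
  intros Hrp Hq1 Hq HrV HQV.
  assert (HQ : QV ^ 2 <= Qmax ^ 2).
  { pose proof (Rabs_pos QV).
    assert (Rabs QV <= Qmax) by nra.
    rewrite <- (pow2_abs QV); nra. }
  assert (HQr : QV ^ 2 / rV ^ 2 <= 4 * (Qmax / rp) ^ 2).
  { unfold Rdiv; rewrite Rpow_mult_distr, pow_inv.
    assert (rp ^ 2 <= 4 * rV ^ 2) by nra.
    assert (/ rV ^ 2 <= 4 * / rp ^ 2).
    { replace (4 * / rp ^ 2) with (/ (rp ^ 2 / 4)) by (field; lra).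
      apply Rinv_le_contravar; nra. }
    apply Rle_trans with (Qmax ^ 2 * / rV ^ 2).
    - apply Rmult_le_compat_r; [apply Rlt_le, Rinv_0_lt_compat; nra | exact HQ].
    - pose proof (pow2_ge_0 Qmax); nra. }
  pose proof (Lam_r2_le_Rmax Lam rV rp ltac:(lra)).
  lra.
Qed.

Lemma rh0_le Lam r0 rp r'0 e q K : 0 < e -> 0 < q -> 0 < K ->
  rp / 2 <= r0 <= rp -> Lam * rp ^ 2 < 3 -> 0 < r'0 -> r'0 <= K * q / e ->
  r0 * ((Lam * r0 ^ 2 / 3 - 1) / (4 * r'0))
    <= - ((3 - Rmax (Lam * rp ^ 2) 0) / (24 * K) * (e * rp / q)).
Proof.
  intros He Hq HK Hr0 HLam Hr' Hr'K.
  set (A := Rmax (Lam * rp ^ 2) 0).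
  assert (HA : A < 3) by (unfold A, Rmax; destruct Rle_dec; lra).
  pose proof (Lam_r2_le_Rmax Lam r0 rp ltac:(lra)) as HLr0; fold A in HLr0.
  assert (Hh0 : (Lam * r0 ^ 2 / 3 - 1) / (4 * r'0) <= (A / 3 - 1) / (4 * (K * q / e))).
  { unfold Rdiv; apply Rle_trans with ((A / 3 - 1) * / (4 * r'0)).
    - apply Rmult_le_compat_r; [apply Rlt_le, Rinv_0_lt_compat |]; lra.
    - apply Rmult_le_compat_neg_l; [lra |].
      apply Rinv_le_contravar; unfold Rdiv in Hr'K; lra. }
  assert (Hneg : (A / 3 - 1) / (4 * (K * q / e)) < 0).
  { apply Rdiv_neg_pos; [lra |]. apply Rmult_lt_0_compat; [lra |].
    apply Rdiv_lt_0_compat; [apply Rmult_lt_0_compat |]; assumption. }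
  apply Rle_trans with (rp / 2 * ((A / 3 - 1) / (4 * (K * q / e)))).
  - nra.
  - right; field; lra.
Qed.

Lemma le_neg_div_of_mul_le rV hV rp M : 0 < M -> 0 < rV <= rp ->
  rV * hV <= - M -> hV <= - (M / rp).
Proof.
  intros HM Hr Hrh.
  apply Rmult_le_reg_r with rp; [lra |].
  replace (- (M / rp) * rp) with (- M) by (field; lra).
  nra.
Qed.

Lemma is_lub_neg (h : R -> R) c : 0 < c -> (forall V, I01 V -> h V <= - c) ->
  exists s, is_lub (fun y => exists V, I01 V /\ y = h V) s /\ s < 0.
Proof.
  intros Hc Hh.
  set (E := fun y => exists V, I01 V /\ y = h V).
  assert (Hub : is_upper_bound E (- c)) by (intros y [V [HV ->]]; auto).
  destruct (completeness E (ex_intro _ _ Hub)) as [s Hs].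
  { exists (h 0), 0; split; [unfold I01; lra | reflexivity]. }
  exists s; split; [exact Hs |].
  pose proof (proj2 Hs _ Hub); lra.
Qed.

Theorem mainTheorem1 :
  forall (K a b : R), 0 < K -> a < 3 -> 0 < b ->
  exists C : R, 0 < C /\
  forall (Lam e q rp Qmax : R) (r r' Q h h' : R -> R),
    0 < e -> 0 < q -> q <= 1 -> 0 < rp -> 0 < Qmax ->
    Lam * rp ^ 2 = a -> Qmax / rp = b ->
    C1_on01 r r' -> (forall V, I01 V -> 0 < r V) ->
    cont_on01 Q ->
    C1_on01 h h' ->
    (forall V, I01 V -> rp / 2 <= r V <= rp) ->
    (forall V, I01 V -> Rabs (Q V) <= q * Qmax) ->
    deriv_on01 (fun V => r V * h V)
      (fun V => - / 4 * (1 - Q V ^ 2 / r V ^ 2 - Lam * r V ^ 2)) ->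
    0 < r' 0 ->
    h 0 = (Lam * r 0 ^ 2 / 3 - 1) / (4 * r' 0) ->
    r' 0 <= K * q / e ->
    e * rp ^ 2 / (q * Qmax) > C ->
    exists s : R, is_lub (fun y => exists V, I01 V /\ y = h V) s /\ s < 0.
Proof.
  intros K a b HK Ha Hb.
  set (A := Rmax a 0); set (M := b ^ 2 + A / 4).
  assert (HA : 0 <= A < 3) by (unfold A, Rmax; destruct Rle_dec; lra).
  assert (HM : 0 < M) by (unfold M; nra).
  exists (48 * K * M / ((3 - A) * b)); split; [apply Rdiv_lt_0_compat; nra |].
  intros Lam e q rp Qmax r r' Q h h' He Hq Hq1 Hrp HQmax Ha' Hb' _ _ _ _
    Hr HQ Hrh Hr'0 Hh0 Hr'K HC.
  subst a.
  assert (H0 : I01 0) by (unfold I01; lra).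
  assert (Hrh_le : forall V, I01 V -> r V * h V <= r 0 * h 0 + M).
  { intros V HV; pose proof (proj2 HV).
    enough (r V * h V <= r 0 * h 0 + M * V) by nra.
    apply (deriv_on01_le_linear _ _ M Hrh); [| exact HV].
    intros W HW; unfold M, A; rewrite <- Hb'; apply (rh_slope_le Lam q rp Qmax); auto. }
  assert (Hlarge : 2 * M < (3 - A) / (24 * K) * (e * rp / q)).
  { replace (e * rp ^ 2 / (q * Qmax)) with (e * rp / q / b) in HC
      by (rewrite <- Hb'; field; lra).
    apply Rmult_gt_compat_r with (r := (3 - A) * b / (48 * K)) in HC;
      [| apply Rdiv_lt_0_compat; nra].
    replace (48 * K * M / ((3 - A) * b) * ((3 - A) * b / (48 * K))) with M in HC
      by (field; lra).
    replace (e * rp / q / b * ((3 - A) * b / (48 * K)))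
      with ((3 - A) / (24 * K) * (e * rp / q) / 2) in HC by (field; lra).
    lra. }
  pose proof (rh0_le Lam (r 0) rp (r' 0) e q K He Hq HK (Hr 0 H0) Ha Hr'0 Hr'K) as Hrh0.
  rewrite <- Hh0 in Hrh0; fold A in Hrh0.
  apply (is_lub_neg h (M / rp)); [apply Rdiv_lt_0_compat; lra |].
  intros V HV; pose proof (Hrh_le V HV); pose proof (Hr V HV).
  apply (le_neg_div_of_mul_le (r V)); lra.
Qed.
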